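(* Let $G=(V,E)$ be an $n$-node $d$-dimensional $\alpha$-quasi unit ball graph. Let $G_0=(V,E_0)$ be its spanning subgraph with $E_0=\{\{u,v\}\in E: |uv|\le \alpha/n\}$. Then the vertex set of every connected component of $G_0$ induces a clique in $G$.
   Context: A $d$-dimensional $\alpha$-quasi unit ball graph, for $0<\alpha\le1$, is a graph whose vertices correspond one-to-one to points of $\mathbb{R}^d$. Writing $|uv|$ for the Euclidean distance between the points of $u$ and $v$, it satisfies: $|uv|\le\alpha$ implies $\{u,v\}$ is an edge, and $|uv|>1$ implies $\{u,v\}$ is not an edge. *)

From mathcomp Require Import all_boot all_order all_algebra.
From mathcomp Require Import reals.
Set Implicit Arguments. Unset Strict Implicit. Unset Printing Implicit Defensive.
Import Order.TTheory GRing.Theory Num.Theory.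
Local Open Scope ring_scope.

Definition edist (R : realType) (d : nat) (x y : 'rV[R]_d) : R :=
  Num.sqrt (\sum_(i < d) (x 0 i - y 0 i) ^+ 2).

Definition simple_graph (V : finType) (e : rel V) : Prop :=
  symmetric e /\ irreflexive e.

Definition quasi_unit_ball_graph (R : realType) (d : nat) (alpha : R)
    (V : finType) (e : rel V) (p : V -> 'rV[R]_d) : Prop :=
  [/\ 0 < alpha /\ alpha <= 1, simple_graph e, injective p,
      (forall u v, u != v -> edist (p u) (p v) <= alpha -> e u v) &
      (forall u v, 1 < edist (p u) (p v) -> ~~ e u v)].

Definition short_edges (R : realType) (d : nat) (V : finType) (e : rel V)
    (p : V -> 'rV[R]_d) (bound : R) : rel V :=
  fun u v => e u v && (edist (p u) (p v) <= bound).

Definition is_clique (V : finType) (e : rel V) (S : {set V}) : Prop :=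
  forall u v, u \in S -> v \in S -> u != v -> e u v.

From mathcomp Require Import all_boot all_order all_algebra.
From mathcomp Require Import reals.
From mathcomp Require Import ring lra.
Set Implicit Arguments. Unset Strict Implicit. Unset Printing Implicit Defensive.
Import Order.TTheory GRing.Theory Num.Theory.
Local Open Scope ring_scope.

(* Two vertices of a component of G_0 are joined by a simple path of short
   edges; it has fewer than n edges, each of length at most alpha/n, so by the
   triangle inequality the two points are at distance at most alpha and hence
   adjacent in G. The triangle inequality for the Euclidean distance is
   Minkowski's inequality, derived from Cauchy-Schwarz via Lagrange's
   identity. *)

Section SumOfSquares.
Variables (R : rcfType) (I : finType).

Lemma sum_sqr_ge0 (f : I -> R) : 0 <= \sum_i f i ^+ 2.
Proof. by apply: sumr_ge0 => i _; exact: sqr_ge0. Qed.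

Variables a b : I -> R.

Lemma lagrange_identity :
  \sum_i \sum_j (a i * b j - a j * b i) ^+ 2 =
  2 * ((\sum_i a i ^+ 2) * (\sum_i b i ^+ 2) - (\sum_i a i * b i) ^+ 2).
Proof.
rewrite expr2 !big_distrlr /=.
set P := \sum_i \sum_j (a i ^+ 2 * b j ^+ 2).
set Q := \sum_i \sum_j (a i * b i * (a j * b j)).
have -> : \sum_i \sum_j (a i * b j - a j * b i) ^+ 2 =
    P + \sum_i \sum_j (a j ^+ 2 * b i ^+ 2) - 2 * Q.
  rewrite mulr_sumr -big_split -sumrB /=; apply: eq_bigr => i _.
  rewrite mulr_sumr -big_split -sumrB /=; apply: eq_bigr => j _; ring.
rewrite exchange_big -/P; ring.
Qed.

Lemma cauchy_schwarz :
  \sum_i a i * b i <= Num.sqrt (\sum_i a i ^+ 2) * Num.sqrt (\sum_i b i ^+ 2).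
Proof.
set A := \sum_i a i ^+ 2; set B := \sum_i b i ^+ 2; set X := \sum_i a i * b i.
have AB_ge0 : 0 <= A * B - X ^+ 2.
  rewrite -(@pmulr_rge0 _ 2) // -lagrange_identity.
  by apply: sumr_ge0 => i _; exact: sum_sqr_ge0.
rewrite -sqrtrM ?sum_sqr_ge0 // (le_trans (ler_norm X)) //.
by rewrite -sqrtr_sqr ler_sqrt ?mulr_ge0 ?sum_sqr_ge0 // -subr_ge0.
Qed.

Lemma minkowski :
  Num.sqrt (\sum_i (a i + b i) ^+ 2) <=
  Num.sqrt (\sum_i a i ^+ 2) + Num.sqrt (\sum_i b i ^+ 2).
Proof.
have := cauchy_schwarz.
set A := \sum_i a i ^+ 2; set B := \sum_i b i ^+ 2; set X := \sum_i a i * b i.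
have -> : \sum_i (a i + b i) ^+ 2 = A + 2 * X + B.
  by rewrite /A /B /X mulr_sumr -!big_split /=; apply: eq_bigr => i _; ring.
have sA : Num.sqrt A ^+ 2 = A := sqr_sqrtr (sum_sqr_ge0 a).
have sB : Num.sqrt B ^+ 2 = B := sqr_sqrtr (sum_sqr_ge0 b).
rewrite -[Num.sqrt A + _]ger0_norm ?addr_ge0 ?sqrtr_ge0 //.
rewrite -sqrtr_sqr ler_sqrt ?sqr_ge0 // sqrrD sA sB mulr2n.
move=> ?; lra.
Qed.

End SumOfSquares.

Section EuclideanDistance.
Variables (R : realType) (d : nat).

Lemma edistxx (x : 'rV[R]_d) : edist x x = 0.
Proof. by rewrite /edist big1 ?sqrtr0 // => i _; rewrite subrr expr0n. Qed.

Lemma edistC (x y : 'rV[R]_d) : edist x y = edist y x.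
Proof. by rewrite /edist; congr Num.sqrt; apply: eq_bigr => i _; ring. Qed.

Lemma edist_triangle (x y z : 'rV[R]_d) : edist x z <= edist x y + edist y z.
Proof.
rewrite /edist (eq_bigr (fun i => ((x 0 i - y 0 i) + (y 0 i - z 0 i)) ^+ 2)).
  exact: minkowski.
by move=> i _; rewrite addrA subrK.
Qed.

Lemma path_edist_le (T : Type) (r : rel T) (p : T -> 'rV[R]_d) (bound : R) :
    (forall u v, r u v -> edist (p u) (p v) <= bound) ->
  forall x q, path r x q -> edist (p x) (p (last x q)) <= (size q)%:R * bound.
Proof.
move=> r_bound x q; elim: q x => [|y q IHq] x /=.
  by rewrite edistxx mul0r.
case/andP=> /r_bound rxy /IHq ryq.
rewrite -addn1 natrD mulrDl mul1r.
by apply: le_trans (edist_triangle _ (p y) _) _; lra.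
Qed.

End EuclideanDistance.

Lemma connect_short_path (T : finType) (r : rel T) (x y : T) :
  connect r x y -> exists q, [/\ path r x q, last x q = y & (size q < #|T|)%N].
Proof.
case/connectP=> q0 /shortenP[q rq uq _] ->; exists q; split=> //.
by rewrite -ltnS -[(size q).+1]/(size (x :: q)) -(card_uniqP uq); exact: max_card.
Qed.

Theorem lemma2p1 (R : realType) (d n : nat) (alpha : R)
    (V : finType) (e : rel V) (p : V -> 'rV[R]_d) :
  #|V| = n ->
  quasi_unit_ball_graph alpha e p ->
  forall x : V,
    is_clique e [set y | connect (short_edges e p (alpha / n%:R)) x y].
Proof.
move=> card_n [[alpha_gt0 _] [e_sym _] _ e_close _] x u v.
rewrite !inE => xu xv uv; apply: e_close => //.
set r := short_edges e p (alpha / n%:R).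
have r_sym : symmetric r by move=> y z; rewrite /r /short_edges e_sym edistC.
have : connect r u v by rewrite (connect_trans _ xv) // sym_connect_sym.
case/connect_short_path=> q [rq <-]; rewrite card_n => q_lt_n.
have n_gt0 : 0 < n%:R :> R by rewrite ltr0n (leq_ltn_trans _ q_lt_n).
have r_short y z : r y z -> edist (p y) (p z) <= alpha / n%:R by case/andP.
apply: le_trans (path_edist_le r_short rq) _.
rewrite mulrCA ger_pMr // ler_pdivrMr // mul1r ler_nat.
exact: ltnW.
Qed.
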